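(* Let $\eta$ be an LTS-to-L$^2$TS transformation that in addition preserves and reflects $=_T^{\lambda}$, let $\mathcal{L}$ be an LTS and $s,t$ states of $\mathcal{L}$. Then $s=_T^{\lambda}t$ if and only if for every $\mathsf{LTL}_{-\mathsf{X}}$ formula $\psi$: $s\models^{\eta}\psi\iff t\models^{\eta}\psi$.
   Context: Fix a set $\mathrm{Act}$ of actions containing $\tau$ and a set $\mathbf{AP}$ of atomic propositions. An LTS is $(S,\to)$ with $\to\subseteq S\times\mathrm{Act}\times S$; paths are alternating sequences $s_0,a_1,s_1,\dots$ with $s_{k-1}\xrightarrow{a_k}s_k$, maximal if infinite or ending in a state without outgoing transitions. A colouring $\mathcal{C}$ maps states to colours; $\mathcal{C}(\pi)$ is obtained from $\mathcal{C}(s_0),a_1,\mathcal{C}(s_1),\dots$ by contracting every finite maximal consecutive subsequence $C,\tau,C,\dots,\tau,C$ and every infinite one $C,\tau,C,\tau,\dots$ to $C$; for $\pi$ from $s$ it is a $\mathcal{C}$-coloured trace of $s$, complete if $\pi$ is maximal, divergent if $\pi$ is infinite and $\mathcal{C}(\pi)$ finite. $\mathcal{C}$ is consistent if equally coloured states have the same $\mathcal{C}$-coloured traces, fully consistent if they have the same complete ones; a consistent $\mathcal{C}$ preserves divergence if they have the same divergent ones. $s\leftrightarrow_b t$ / $s\leftrightarrow_b^{ds}t$ / $s\leftrightarrow_b^{\Delta}t$ iff some consistent / fully consistent / consistent divergence preserving $\mathcal{C}$ has $\mathcal{C}(s)=\mathcal{C}(t)$. With $\mathbf{T}$ the trivial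 colouring (one colour for all states), $s=_T^{\lambda}t$ iff $s,t$ have the same complete $\mathbf{T}$-coloured traces. A Kripke structure is $(S,L,\to)$ with $L:S\to\mathcal{P}(\mathbf{AP})$, $\to\subseteq S\times S$; paths and maximal paths are sequences of states defined analogously. An L$^2$TS is $(S,L,\to)$ with $L:S\to\mathcal{P}(\mathbf{AP})$, $\to\subseteq S\times\mathrm{Act}\times S$; associated LTS $(S,\to)$, associated Kripke structure $(S,L,\{(s,t)\mid\exists a.\ s\xrightarrow{a}t\})$. It is consistent if (i) $s\xrightarrow{a}t$ implies ($L(s)=L(t)$ iff $a=\tau$); (ii) $s\xrightarrow{a}t$, $s'\xrightarrow{a}t'$, $L(s)=L(s')$ imply $L(t)=L(t')$; (iii) $s\xrightarrow{a}t$, $s'\xrightarrow{b}t'$, $L(s)=L(s')$, $L(t)=L(t')$ imply $a=b$. For an equivalence $\sim$ defined on LTSs and states $u,v$ of an L$^2$TS, $u\sim v$ means $L(u)=L(v)$ and $u\sim v$ in the associated LTS. An LTS-to-L$^2$TS transformation $\eta$ assigns to each LTS $\mathcal{L}$ a consistent L$^2$TS $\eta(\mathcal{L})$ and to each state $s$ of $\mathcal{L}$ a state $\eta(s)$ of $\eta(\mathcal{L})$ such that $s\sim t\iff\eta(s)\sim\eta(t)$ for each $\sim\in\{\leftrightarrow_b,\leftrightarrow_b^{ds},\leftrightarrow_b^{\Delta}\}$; it preserves and reflects $=_T^{\lambda}$ if also $s=_T^{\lambda}t\iff\eta(s)=_T^{\lambda}\eta(t)$. $\mathsf{LTL}_{-\mathsf{X}}$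 formulas: $\psi::=p\mid\neg\psi\mid\bigwedge\Psi'\mid\psi\,\mathsf{U}\,\psi$ ($p\in\mathbf{AP}$, $\Psi'$ arbitrary sets); on maximal paths of a Kripke structure: $\pi\models p$ iff $p$ is in the label of its first state; negation/conjunction as usual; $\pi\models\psi\,\mathsf{U}\,\psi'$ iff some suffix $\pi'$ of $\pi$ has $\pi'\models\psi'$ and $\pi''\models\psi$ for every suffix $\pi''$ of $\pi$ of which $\pi'$ is a proper suffix; a state satisfies $\psi$ iff all maximal paths from it do. For $s$ a state of $\mathcal{L}$: $s\models^{\eta}\psi$ iff $\eta(s)\models\psi$ in the Kripke structure associated to $\eta(\mathcal{L})$. *)

From Stdlib Require Import Arith.

Set Implicit Arguments.
Unset Strict Implicit.

Section LTSdefs.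
Variable Act : Type.
Variable tau : Act.

(** A (finite or infinite) path s_0, a_1, s_1, a_2, ...:
    [pst k] is s_k, [pact k] is a_{k+1} (the action of the k-th step,
    from s_k to s_{k+1}), [plen = Some n] means the path has n steps
    (ends in s_n), [plen = None] means it is infinite.  Values outside
    the range are irrelevant junk. *)
Record path (St : Type) := mkPath {
  pst : nat -> St;
  pact : nat -> Act;
  plen : option nat }.

Definition step_in (len : option nat) (k : nat) : Prop :=
  match len with None => True | Some n => k < n end.

Definition is_path (St : Type) (tr : St -> Act -> St -> Prop) (s : St) (p : path St) : Prop :=
  pst p 0 = s /\
  forall k, step_in (plen p) k -> tr (pst p k) (pact p k) (pst p (S k)).

Definition maximal (St : Type) (tr : St -> Act -> St -> Prop) (p : path St) : Prop :=
  match plen p with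
  | None => True
  | Some n => forall a u, ~ tr (pst p n) a u
  end.

(** A coloured trace C_0, b_1, C_1, b_2, C_2, ...: [ct0] is C_0 and
    [ctf j = Some (b_{j+1}, C_{j+1})]; [ctf j = None] once the trace has ended
    (a finite trace with n actions has ctf j = None for all j >= n). *)
Record ctrace (Col : Type) := mkCtrace {
  ct0 : Col;
  ctf : nat -> option (Act * Col) }.

(** [nth_sat P j k]: k is the j-th (0-based) natural number satisfying P. *)
Inductive nth_sat (P : nat -> Prop) : nat -> nat -> Prop :=
| nth_sat0 : forall k, P k -> (forall i, i < k -> ~ P i) -> nth_sat P 0 k
| nth_satS : forall j k k', nth_sat P j k -> P k' -> k < k' ->
    (forall i, k < i -> i < k' -> ~ P i) -> nth_sat P (S j) k'.

(** Contracting every maximal block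
    C,tau,C,...,tau,C (finite or infinite) to C amounts exactly to deleting
    all such inert steps. *)
Definition noninert (St Col : Type) (C : St -> Col) (p : path St) (k : nat) : Prop :=
  step_in (plen p) k /\ ~ (pact p k = tau /\ C (pst p k) = C (pst p (S k))).

Definition is_ctrace_of (St Col : Type) (C : St -> Col) (p : path St) (sigma : ctrace Col) : Prop :=
  ct0 sigma = C (pst p 0) /\
  forall j a c, ctf sigma j = Some (a, c) <->
    exists k, nth_sat (noninert C p) j k /\ pact p k = a /\ C (pst p (S k)) = c.

Definition finite_ctrace (Col : Type) (sigma : ctrace Col) : Prop :=
  exists j, ctf sigma j = None.

Section Traces.
Variables (St Col : Type) (tr : St -> Act -> St -> Prop) (C : St -> Col).

Definition ctraces (s : St) (sigma : ctrace Col) : Prop :=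
  exists p, is_path tr s p /\ is_ctrace_of C p sigma.

Definition complete_ctraces (s : St) (sigma : ctrace Col) : Prop :=
  exists p, is_path tr s p /\ maximal tr p /\ is_ctrace_of C p sigma.

Definition divergent_ctraces (s : St) (sigma : ctrace Col) : Prop :=
  exists p, is_path tr s p /\ plen p = None /\ is_ctrace_of C p sigma /\
            finite_ctrace sigma.

Definition col_consistent : Prop :=
  forall s t, C s = C t -> forall sigma, ctraces s sigma <-> ctraces t sigma.

Definition col_fully_consistent : Prop :=
  forall s t, C s = C t ->
    forall sigma, complete_ctraces s sigma <-> complete_ctraces t sigma.

Definition col_div_preserving : Prop :=
  col_consistent /\
  forall s t, C s = C t ->
    forall sigma, divergent_ctraces s sigma <-> divergent_ctraces t sigma.
End Traces.

Definition bbisim (St : Type) (tr : St -> Act -> St -> Prop) (s t : St) : Prop :=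
  exists (Col : Type) (C : St -> Col), col_consistent tr C /\ C s = C t.

Definition bbisim_ds (St : Type) (tr : St -> Act -> St -> Prop) (s t : St) : Prop :=
  exists (Col : Type) (C : St -> Col), col_fully_consistent tr C /\ C s = C t.

Definition bbisim_div (St : Type) (tr : St -> Act -> St -> Prop) (s t : St) : Prop :=
  exists (Col : Type) (C : St -> Col), col_div_preserving tr C /\ C s = C t.

Definition trT (St : Type) (tr : St -> Act -> St -> Prop) (s t : St) : Prop :=
  forall sigma : ctrace unit,
    complete_ctraces tr (fun _ => tt) s sigma <-> complete_ctraces tr (fun _ => tt) t sigma.

Record LTS := mkLTS {
  lts_st : Type;
  lts_tr : lts_st -> Act -> lts_st -> Prop }.
Arguments lts_tr : clear implicits.

Variable AP : Type.

(** labels are subsets of AP, represented as predicates; label equality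
    L(s) = L(t) is Leibniz equality of predicates (= set equality under
    functional/propositional extensionality). *)
Record L2TS := mkL2TS {
  l2_st : Type;
  l2_lab : l2_st -> (AP -> Prop);
  l2_tr : l2_st -> Act -> l2_st -> Prop }.
Arguments l2_lab : clear implicits.
Arguments l2_tr : clear implicits.

Definition l2_consistent (M : L2TS) : Prop :=
  (forall s a t, l2_tr M s a t -> (l2_lab M s = l2_lab M t <-> a = tau)) /\
  (forall s a t s' t', l2_tr M s a t -> l2_tr M s' a t' ->
      l2_lab M s = l2_lab M s' -> l2_lab M t = l2_lab M t') /\
  (forall s a t s' b t', l2_tr M s a t -> l2_tr M s' b t' ->
      l2_lab M s = l2_lab M s' -> l2_lab M t = l2_lab M t' -> a = b).

Definition l2_equiv (rel : forall St : Type, (St -> Act -> St -> Prop) -> St -> St -> Prop)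
  (M : L2TS) (u v : l2_st M) : Prop :=
  l2_lab M u = l2_lab M v /\ rel (l2_st M) (l2_tr M) u v.

Arguments l2_equiv rel M u v : clear implicits.

Definition is_transformation (eta : LTS -> L2TS)
  (etas : forall L : LTS, lts_st L -> l2_st (eta L)) : Prop :=
  forall L : LTS,
    l2_consistent (eta L) /\
    forall s t : lts_st L,
      (bbisim (lts_tr L) s t <-> l2_equiv bbisim (eta L) (etas L s) (etas L t)) /\
      (bbisim_ds (lts_tr L) s t <-> l2_equiv bbisim_ds (eta L) (etas L s) (etas L t)) /\
      (bbisim_div (lts_tr L) s t <-> l2_equiv bbisim_div (eta L) (etas L s) (etas L t)).

Definition preserves_reflects_trT (eta : LTS -> L2TS)
  (etas : forall L : LTS, lts_st L -> l2_st (eta L)) : Prop :=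
  forall (L : LTS) (s t : lts_st L),
    trT (lts_tr L) s t <-> l2_equiv trT (eta L) (etas L s) (etas L t).

End LTSdefs.

Inductive form (AP : Type) : Type :=
| FAtom : AP -> form AP
| FNeg : form AP -> form AP
| FConj : forall I : Type, (I -> form AP) -> form AP
| FUntil : form AP -> form AP -> form AP.

(** Kripke path: [kst k] is the k-th state; [klen = Some n] means the path is
    s_0 ... s_n, [None] means infinite. *)
Record kpath (St : Type) := mkKpath {
  kst : nat -> St;
  klen : option nat }.

Definition kmaximal_path (St : Type) (R : St -> St -> Prop) (p : kpath St) : Prop :=
  (forall k, step_in (klen p) k -> R (kst p k) (kst p (S k))) /\
  match klen p with
  | None => True
  | Some n => forall v, ~ R (kst p n) v
  end.

Definition pos_in (len : option nat) (k : nat) : Prop :=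
  match len with None => True | Some n => k <= n end.

Definition ksuffix (St : Type) (p : kpath St) (k : nat) : kpath St :=
  mkKpath (fun i => kst p (k + i)) (option_map (fun n => n - k) (klen p)).

Fixpoint ksat (AP St : Type) (lab : St -> (AP -> Prop)) (psi : form AP) (p : kpath St)
  {struct psi} : Prop :=
  match psi with
  | FAtom q => lab (kst p 0) q
  | FNeg psi1 => ~ ksat lab psi1 p
  | FConj f => forall i, ksat lab (f i) p
  | FUntil psi1 psi2 =>
      exists k, pos_in (klen p) k /\ ksat lab psi2 (ksuffix p k) /\
                forall i, i < k -> ksat lab psi1 (ksuffix p i)
  end.

Definition l2_krel (Act AP : Type) (M : L2TS Act AP) (u v : l2_st M) : Prop :=
  exists a, @l2_tr Act AP M u a v.

Definition l2_state_sat (Act AP : Type) (M : L2TS Act AP) (u : l2_st M) (psi : form AP) : Prop :=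
  forall p : kpath (l2_st M), kst p 0 = u -> kmaximal_path (@l2_krel Act AP M) p ->
    ksat (@l2_lab Act AP M) psi p.

From Stdlib Require Import Arith Lia Wf_nat Classical ClassicalEpsilon
  FunctionalExtensionality PropExtensionality.

(* By the preservation of =_T^lambda it suffices to show, for states u, v of a
   consistent L2TS, that L(u) = L(v) and u, v have the same complete
   T-coloured traces iff u, v satisfy the same LTL_{-X} formulas.  In a
   consistent L2TS a step is inert for the trivial colouring iff it keeps the
   label, the label after a non-inert step is determined by the label before it
   and its action, and the action is determined by both labels.  Hence maximal
   paths from equally labelled states have the same T-coloured trace iff they
   are stutter equivalent, i.e. have the same sequence of label blocks.
   LTL_{-X} does not distinguish stutter-equivalent paths; conversely every
   maximal path has a characteristic formula, a conjunction of nested untils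
   describing ever longer prefixes of its block sequence, that holds exactly on
   the paths stutter equivalent to it.  Labels are recovered from atoms. *)

Lemma exists_least (P : nat -> Prop) :
  (exists n, P n) -> exists n, P n /\ forall m, m < n -> ~ P m.
Proof.
  intro Hex.
  destruct (dec_inh_nat_subset_has_unique_least_element P (fun n => classic (P n)) Hex)
    as [n [[Hn Hleast] _]].
  exists n; split; auto. intros m Hm HPm. specialize (Hleast m HPm). lia.
Qed.

Definition indicator (P : Prop) : nat := if excluded_middle_informative P then 1 else 0.

Fixpoint count_below (P : nat -> Prop) (k : nat) : nat :=
  match k with 0 => 0 | S k => count_below P k + indicator (P k) end.

Section CountBelow.
Variable P : nat -> Prop.

Lemma count_below_S_true k : P k -> count_below P (S k) = S (count_below P k).
Proof.
  intro H; simpl; unfold indicator.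
  destruct (excluded_middle_informative (P k)); [lia | contradiction].
Qed.

Lemma count_below_S_false k : ~ P k -> count_below P (S k) = count_below P k.
Proof.
  intro H; simpl; unfold indicator.
  destruct (excluded_middle_informative (P k)); [contradiction | lia].
Qed.

Lemma count_below_S_le k : count_below P (S k) <= S (count_below P k).
Proof.
  destruct (classic (P k)); [rewrite count_below_S_true | rewrite count_below_S_false]; auto.
Qed.

Lemma count_below_mono i k : i <= k -> count_below P i <= count_below P k.
Proof.
  induction 1; auto.
  destruct (classic (P m)); [rewrite count_below_S_true | rewrite count_below_S_false]; auto.
Qed.

Lemma count_below_eq0 k : count_below P k = 0 <-> forall i, i < k -> ~ P i.
Proof.
  split.
  - intros H i Hi HP. pose proof (count_below_mono (S i) k Hi).
    rewrite count_below_S_true in H0; auto. lia.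
  - induction k; intro H; auto. rewrite count_below_S_false; auto.
Qed.

Lemma count_below_stable a b : a <= b -> (forall i, a <= i -> i < b -> ~ P i) ->
  count_below P b = count_below P a.
Proof.
  induction 1; intro Hgap; auto.
  rewrite count_below_S_false by (apply Hgap; lia). apply IHle. intros; apply Hgap; lia.
Qed.

Lemma count_below_last k j : count_below P k = S j ->
  exists k0, k0 < k /\ P k0 /\ count_below P k0 = j /\ forall i, k0 < i -> i < k -> ~ P i.
Proof.
  induction k; intro H; [discriminate|].
  destruct (classic (P k)) as [HP|HP].
  - rewrite count_below_S_true in H by auto. exists k; repeat split; auto; lia.
  - rewrite count_below_S_false in H by auto.
    destruct (IHk H) as [k0 [? [? [? Hgap]]]]. exists k0; repeat split; auto.
    intros i ? ?. destruct (Nat.eq_dec i k); subst; auto. apply Hgap; lia.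
Qed.

Lemma nth_sat_iff_count j k : nth_sat P j k <-> P k /\ count_below P k = j.
Proof.
  split.
  - induction 1 as [k HP Hbefore|j k k' _ [HPk Hk] HPk' Hlt Hgap].
    + split; auto. apply count_below_eq0; auto.
    + split; auto. rewrite (count_below_stable (S k) k'), count_below_S_true; auto.
  - revert k; induction j; intros k [HP Hc].
    + constructor; auto. apply count_below_eq0; auto.
    + destruct (count_below_last k j Hc) as [k0 [? [? [? ?]]]]. econstructor; eauto.
Qed.

Lemma nth_sat_unique j k k' : nth_sat P j k -> nth_sat P j k' -> k = k'.
Proof.
  rewrite !nth_sat_iff_count. intros [HPk Hk] [HPk' Hk'].
  destruct (lt_eq_lt_dec k k') as [[Hlt|]|Hlt]; auto; exfalso.
  - pose proof (count_below_mono (S k) k' Hlt). rewrite count_below_S_true in H; auto. lia.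
  - pose proof (count_below_mono (S k') k Hlt). rewrite count_below_S_true in H; auto. lia.
Qed.

End CountBelow.

Lemma count_below_ext (P Q : nat -> Prop) k :
  (forall i, P i <-> Q i) -> count_below P k = count_below Q k.
Proof.
  intro H. replace Q with P; auto.
  apply functional_extensionality; intro i; apply propositional_extensionality; auto.
Qed.

Lemma pos_in_0 len : pos_in len 0.
Proof. destruct len; simpl; lia. Qed.

Lemma pos_in_le len i k : pos_in len k -> i <= k -> pos_in len i.
Proof. destruct len; simpl; lia. Qed.

Lemma step_in_pos_in len k : step_in len k -> pos_in len k.
Proof. destruct len; simpl; lia. Qed.

Lemma step_in_iff_pos_in_S len k : step_in len k <-> pos_in len (S k).
Proof. destruct len; simpl; lia. Qed.

Section Suffixes.
Context {St : Type}.
Implicit Types (p : kpath St).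

Lemma kst_ksuffix_0 p k : kst (ksuffix p k) 0 = kst p k.
Proof. simpl; rewrite Nat.add_0_r; auto. Qed.

Lemma ksuffix_0 p : ksuffix p 0 = p.
Proof. destruct p as [f [n|]]; unfold ksuffix; simpl; auto. rewrite Nat.sub_0_r; auto. Qed.

Lemma ksuffix_ksuffix p k i : ksuffix (ksuffix p k) i = ksuffix p (k + i).
Proof.
  destruct p as [f len]. unfold ksuffix; simpl. f_equal.
  - apply functional_extensionality; intro x. f_equal; lia.
  - destruct len; simpl; auto. f_equal; lia.
Qed.

Lemma pos_in_ksuffix p k i : pos_in (klen p) k ->
  (pos_in (klen (ksuffix p k)) i <-> pos_in (klen p) (k + i)).
Proof. destruct p as [f [n|]]; simpl; lia. Qed.

Lemma step_in_ksuffix p k i : pos_in (klen p) k ->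
  (step_in (klen (ksuffix p k)) i <-> step_in (klen p) (k + i)).
Proof. destruct p as [f [n|]]; simpl; lia. Qed.

End Suffixes.

Section Blocks.
Context {AP St : Type} (lab : St -> (AP -> Prop)).
Implicit Types (p q r : kpath St) (l : AP -> Prop).

Definition label_change p k : Prop :=
  step_in (klen p) k /\ lab (kst p k) <> lab (kst p (S k)).

Definition block p : nat -> nat := count_below (label_change p).

Definition block_label p j l : Prop :=
  exists k, pos_in (klen p) k /\ block p k = j /\ lab (kst p k) = l.

Lemma block_label_at p k : pos_in (klen p) k -> block_label p (block p k) (lab (kst p k)).
Proof. intro Hk; exists k; auto. Qed.

Lemma block_S_le p k : block p (S k) <= S (block p k).
Proof. apply count_below_S_le. Qed.

Lemma block_mono p i k : i <= k -> block p i <= block p k.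
Proof. apply count_below_mono. Qed.

Lemma label_eq_of_block_eq p k1 k2 : pos_in (klen p) k1 -> pos_in (klen p) k2 ->
  block p k1 = block p k2 -> lab (kst p k1) = lab (kst p k2).
Proof.
  assert (Hle : forall k1 k2, k1 <= k2 -> pos_in (klen p) k2 -> block p k1 = block p k2 ->
            lab (kst p k1) = lab (kst p k2)).
  { clear k1 k2. intros k1 k2 Hle. induction Hle as [|k2 Hle IH]; intros Hpos Hb; auto.
    pose proof (block_mono p k1 k2 Hle). pose proof (block_mono p k2 (S k2) (Nat.le_succ_diag_r _)).
    rewrite IH by (eauto using pos_in_le || lia).
    destruct (classic (label_change p k2)) as [Hc|Hc].
    - unfold block in *. rewrite count_below_S_true in Hb by auto. lia.
    - apply NNPP; intro Hne; apply Hc. split; [apply step_in_iff_pos_in_S|]; auto. }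
  intros H1 H2 Hb. destruct (le_ge_dec k1 k2); [|symmetry]; apply Hle; auto.
Qed.

Lemma block_label_unique p j l l' : block_label p j l -> block_label p j l' -> l = l'.
Proof.
  intros [k [? [? ?]]] [k' [? [? ?]]]; subst. apply label_eq_of_block_eq; auto.
Qed.

Lemma block_label_0 p l : block_label p 0 l <-> l = lab (kst p 0).
Proof.
  split.
  - intro H. apply (block_label_unique p 0); auto. apply (block_label_at p 0), pos_in_0.
  - intros ->. apply (block_label_at p 0), pos_in_0.
Qed.

Lemma block_label_downward p j1 j2 l : block_label p j2 l -> j1 <= j2 ->
  exists l1, block_label p j1 l1.
Proof.
  intros [k [Hk [<- _]]] Hj.
  assert (Hreach : forall m, j1 <= block p m -> exists k1, k1 <= m /\ block p k1 = j1).
  { clear Hk Hj. induction m as [|m IH]; intro H.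
    - exists 0; split; auto. change (block p 0) with 0 in *; lia.
    - destruct (le_lt_dec j1 (block p m)) as [Hle|Hlt].
      + destruct (IH Hle) as [k1 [? ?]]. exists k1; split; auto.
      + exists (S m); split; auto. pose proof (block_S_le p m). lia. }
  destruct (Hreach k Hj) as [k1 [? <-]].
  exists (lab (kst p k1)). apply block_label_at. eapply pos_in_le; eauto.
Qed.

Lemma first_position_of_block p j l : block_label p j l ->
  exists k, pos_in (klen p) k /\ block p k = j /\ lab (kst p k) = l /\
            forall m, m < k -> block p m < j.
Proof.
  intro H.
  destruct (exists_least (fun k => pos_in (klen p) k /\ block p k = j)) as [k [[Hk Hb] Hmin]].
  { destruct H as [k [? [? ?]]]; eauto. }
  exists k; repeat split; auto.
  - destruct H as [k' [? [? ?]]]; subst. apply label_eq_of_block_eq; auto.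
  - intros m Hm. pose proof (block_mono p m k (Nat.lt_le_incl _ _ Hm)).
    assert (block p m <> j) by (intro; apply (Hmin m Hm); split; eauto using pos_in_le, Nat.lt_le_incl).
    lia.
Qed.

Lemma block_label_S p j l : block_label p (S j) l <->
  exists k, label_change p k /\ block p k = j /\ lab (kst p (S k)) = l.
Proof.
  split.
  - intro H. destruct (first_position_of_block p (S j) l H) as [[|k] [Hk [Hb [Hl Hmin]]]];
      [discriminate|].
    pose proof (Hmin k (Nat.lt_succ_diag_r k)). pose proof (block_S_le p k).
    exists k; split; [|split; [lia | auto]].
    apply NNPP; intro Hc. unfold block in *. rewrite count_below_S_false in Hb; auto. lia.
  - intros [k [Hc [Hb Hl]]]. exists (S k); repeat split; auto.
    + apply step_in_iff_pos_in_S, Hc.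
    + unfold block in *. rewrite count_below_S_true; auto.
Qed.

Lemma label_change_source p k : label_change p k ->
  block_label p (block p k) (lab (kst p k)).
Proof. intros [Hk _]. apply block_label_at, step_in_pos_in, Hk. Qed.

Lemma block_label_S_neq p j l l' : block_label p j l -> block_label p (S j) l' -> l <> l'.
Proof.
  intros H1 H2. apply block_label_S in H2. destruct H2 as [k [Hc [<- <-]]].
  rewrite (block_label_unique _ _ _ _ H1 (label_change_source p k Hc)). apply Hc.
Qed.

Lemma block_const p l k : (forall i, i <= k -> lab (kst p i) = l) -> block p k = 0.
Proof.
  intro H. apply count_below_eq0. intros i Hi [_ Hc]. apply Hc. rewrite !H; auto; lia.
Qed.

Lemma label_change_ksuffix p k i : pos_in (klen p) k ->
  (label_change (ksuffix p k) i <-> label_change p (k + i)).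
Proof.
  intro H. unfold label_change. rewrite step_in_ksuffix by auto. simpl.
  rewrite Nat.add_succ_r. tauto.
Qed.

Lemma block_ksuffix p k i : pos_in (klen p) k ->
  block (ksuffix p k) i + block p k = block p (k + i).
Proof.
  intro Hk. induction i as [|i IH]; [rewrite Nat.add_0_r; auto|].
  rewrite Nat.add_succ_r. destruct (classic (label_change p (k + i))) as [Hc|Hc];
    unfold block in *.
  - rewrite !count_below_S_true; [lia | auto | apply label_change_ksuffix; auto].
  - rewrite !count_below_S_false; [lia | auto | rewrite label_change_ksuffix; auto].
Qed.

Lemma block_label_ksuffix p k i l : pos_in (klen p) k ->
  (block_label (ksuffix p k) i l <-> block_label p (block p k + i) l).
Proof.
  intro Hk. split.
  - intros [i' [Hp [Hb Hl]]]. exists (k + i'); repeat split; auto.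
    + apply pos_in_ksuffix; auto.
    + rewrite <- block_ksuffix by auto. lia.
  - intros [k2 [Hp [Hb Hl]]]. destruct (le_lt_dec k k2) as [Hle|Hlt].
    + pose proof (block_ksuffix p k (k2 - k) Hk) as Hsum.
      exists (k2 - k); rewrite pos_in_ksuffix by auto; simpl.
      replace (k + (k2 - k)) with k2 in * by lia. repeat split; auto; lia.
    + pose proof (block_mono p k2 k (Nat.lt_le_incl _ _ Hlt)).
      replace i with 0 by lia. exists 0; split; [apply pos_in_0 | split; auto].
      rewrite kst_ksuffix_0, <- Hl. apply label_eq_of_block_eq; auto; lia.
Qed.

Definition stutter_equiv p q : Prop := forall j l, block_label p j l <-> block_label q j l.

Lemma stutter_equiv_sym p q : stutter_equiv p q -> stutter_equiv q p.
Proof. intros H j l; symmetry; apply H. Qed.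

Lemma stutter_equiv_head p q : stutter_equiv p q -> lab (kst p 0) = lab (kst q 0).
Proof. intro H. symmetry. apply block_label_0, H, block_label_0; auto. Qed.

Lemma stutter_equiv_ksuffix p q k k' : stutter_equiv p q ->
  pos_in (klen p) k -> pos_in (klen q) k' -> block p k = block q k' ->
  stutter_equiv (ksuffix p k) (ksuffix q k').
Proof. intros H Hk Hk' Hb j l. rewrite !block_label_ksuffix, Hb by auto. apply H. Qed.

Lemma stutter_equiv_first_position p q k : stutter_equiv p q -> pos_in (klen p) k ->
  exists k', pos_in (klen q) k' /\ block q k' = block p k /\
             forall m, m < k' -> block q m < block p k.
Proof.
  intros H Hk. pose proof (proj1 (H _ _) (block_label_at p k Hk)) as Hq.
  destruct (first_position_of_block q _ _ Hq) as [k' [? [? [_ ?]]]]. eauto.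
Qed.

Lemma ksat_stutter_equiv (psi : form AP) p q :
  stutter_equiv p q -> ksat lab psi p -> ksat lab psi q.
Proof.
  revert p q.
  induction psi as [a|psi IH|I f IH|psi1 IH1 psi2 IH2]; intros p q H; simpl.
  - rewrite (stutter_equiv_head p q H); auto.
  - intros Hn Hq; apply Hn, (IH q p); auto using stutter_equiv_sym.
  - intros Hp i. apply (IH i p); auto.
  - intros [k [Hk [H2 H1]]].
    destruct (stutter_equiv_first_position p q k H Hk) as [k' [Hk' [Hb Hbefore]]].
    exists k'; split; [auto | split].
    + apply (IH2 (ksuffix p k)); auto using stutter_equiv_ksuffix.
    + intros i' Hi'. assert (Hpi' : pos_in (klen q) i') by (eapply pos_in_le; eauto; lia).
      destruct (stutter_equiv_first_position q p i' (stutter_equiv_sym _ _ H) Hpi')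
        as [i [Hi [Hbi _]]].
      assert (i < k).
      { destruct (le_lt_dec k i) as [Hki|]; auto.
        pose proof (block_mono p k i Hki). pose proof (Hbefore i' Hi'). lia. }
      apply (IH1 (ksuffix p i)); auto using stutter_equiv_ksuffix.
Qed.

End Blocks.

Section Connectives.
Context {AP : Type}.

Definition ftrue : form AP := FConj (fun e : Empty_set => match e with end).
Definition fand (psi1 psi2 : form AP) : form AP := FConj (fun b : bool => if b then psi1 else psi2).
Definition fglobally (psi : form AP) : form AP := FNeg (FUntil ftrue (FNeg psi)).
Definition flabel (l : AP -> Prop) : form AP :=
  FConj (fun a : AP => if excluded_middle_informative (l a) then FAtom a else FNeg (FAtom a)).

Context {St : Type} (lab : St -> (AP -> Prop)).
Implicit Types (r : kpath St).

Lemma ksat_fand psi1 psi2 r : ksat lab (fand psi1 psi2) r <-> ksat lab psi1 r /\ ksat lab psi2 r.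
Proof.
  simpl. split; [intro H; split; [apply (H true) | apply (H false)] | intros [? ?] [|]; auto].
Qed.

Lemma ksat_fglobally psi r :
  ksat lab (fglobally psi) r <-> forall k, pos_in (klen r) k -> ksat lab psi (ksuffix r k).
Proof.
  simpl. split.
  - intros H k Hk. apply NNPP; intro Hn. apply H. exists k; repeat split; auto. intros _ _ [].
  - intros H [k [Hk [Hn _]]]. apply Hn; auto.
Qed.

Lemma ksat_flabel l r : ksat lab (flabel l) r <-> lab (kst r 0) = l.
Proof.
  simpl. split.
  - intro H. apply functional_extensionality; intro a. apply propositional_extensionality.
    specialize (H a). destruct (excluded_middle_informative (l a)); simpl in H; tauto.
  - intros Heq a. destruct (excluded_middle_informative (l a)); simpl; rewrite Heq; tauto.
Qed.

End Connectives.

Section CharacteristicFormula.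
Context {AP St : Type} (lab : St -> (AP -> Prop)) (p : kpath St).
Implicit Types (r : kpath St) (l : AP -> Prop).

Definition block_label_opt (j : nat) : option (AP -> Prop) :=
  epsilon (inhabits None) (fun o => match o with
    | Some l => block_label lab p j l
    | None => forall l, ~ block_label lab p j l end).

Lemma block_label_opt_spec j : match block_label_opt j with
  | Some l => block_label lab p j l
  | None => forall l, ~ block_label lab p j l end.
Proof.
  apply (epsilon_spec (inhabits None) (fun o => match o with
    | Some l => block_label lab p j l | None => forall l, ~ block_label lab p j l end)).
  destruct (classic (exists l, block_label lab p j l)) as [[l Hl]|Hn].
  - exists (Some l); auto.
  - exists None. intros l Hl; eauto.
Qed.

Lemma block_label_opt_some j l : block_label_opt j = Some l -> block_label lab p j l.
Proof. intro E. pose proof (block_label_opt_spec j) as H. rewrite E in H. exact H. Qed.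

Lemma block_label_opt_none j l : block_label_opt j = None -> ~ block_label lab p j l.
Proof. intro E. pose proof (block_label_opt_spec j) as H. rewrite E in H. apply H. Qed.

Lemma block_label_opt_none_above j i l : block_label_opt (S j) = None -> j < i ->
  ~ block_label lab p i l.
Proof.
  intros Hj1 Hi Hl. destruct (block_label_downward lab p (S j) i l Hl Hi) as [l' Hl'].
  exact (block_label_opt_none (S j) l' Hj1 Hl').
Qed.

Lemma block_label_opt_of j l : block_label lab p j l -> block_label_opt j = Some l.
Proof.
  intro Hl. pose proof (block_label_opt_spec j) as H.
  destruct (block_label_opt j) as [l'|].
  - f_equal. apply (block_label_unique lab p j); auto.
  - exfalso; apply (H l Hl).
Qed.

Definition block_form (j : nat) : form AP :=
  match block_label_opt j with Some l => flabel l | None => ftrue end.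

Lemma ksat_block_form j l r : block_label_opt j = Some l ->
  (ksat lab (block_form j) r <-> lab (kst r 0) = l).
Proof. intro E. unfold block_form; rewrite E. apply ksat_flabel. Qed.

(* [blocks_form m j] prescribes the labels of blocks j, ..., j + m of [p]; if
   block j is the last block of [p], it requires its label forever. *)
Fixpoint blocks_form (m j : nat) : form AP :=
  match m with
  | 0 => block_form j
  | S m' => match block_label_opt (S j) with
            | Some _ => fand (block_form j) (FUntil (block_form j) (blocks_form m' (S j)))
            | None => fglobally (block_form j)
            end
  end.

Definition char_form : form AP := FConj (fun m : nat => blocks_form m 0).

Lemma ksat_blocks_form_head m j l r : block_label_opt j = Some l ->
  ksat lab (blocks_form m j) r -> lab (kst r 0) = l.
Proof.
  intro Hj. destruct m as [|m]; simpl.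
  - apply ksat_block_form; auto.
  - destruct (block_label_opt (S j)).
    + intro H. apply ksat_fand in H. apply (ksat_block_form j l r Hj), H.
    + intro H. apply ksat_fglobally with (k := 0) in H; [|apply pos_in_0].
      rewrite ksuffix_0 in H. apply (ksat_block_form j l r Hj), H.
Qed.

Lemma blocks_form_block_label_0 m j lj r l : block_label_opt j = Some lj ->
  ksat lab (blocks_form m j) r -> (block_label lab r 0 l <-> block_label lab p j l).
Proof.
  intros Hj Hr. rewrite block_label_0, (ksat_blocks_form_head m j lj r Hj Hr).
  pose proof (block_label_opt_some j lj Hj). split.
  - intros ->; auto.
  - intro Hl. apply (block_label_unique lab p j); auto.
Qed.

Lemma blocks_form_sound m : forall j r lj, block_label_opt j = Some lj ->
  ksat lab (blocks_form m j) r ->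
  forall i l, i <= m -> (block_label lab r i l <-> block_label lab p (j + i) l).
Proof.
  induction m as [|m IH]; intros j r lj Hj Hr [|i] l Hi;
    try (rewrite Nat.add_0_r; eapply blocks_form_block_label_0; eauto; fail);
    [lia|].
  pose proof (ksat_blocks_form_head (S m) j lj r Hj Hr) as Hhead.
  simpl in Hr. destruct (block_label_opt (S j)) as [l1|] eqn:Hj1.
  - apply ksat_fand in Hr. destruct Hr as [_ [k [Hk [Hrest Hbefore]]]].
    pose proof (ksat_blocks_form_head m (S j) l1 _ Hj1 Hrest) as Hk1.
    rewrite kst_ksuffix_0 in Hk1.
    assert (Hne : lj <> l1)
      by (apply (block_label_S_neq lab p j); apply block_label_opt_some; auto).
    destruct k as [|k]; [congruence|].
    assert (Hconst : forall i0, i0 <= k -> lab (kst r i0) = lj).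
    { intros i0 Hi0. specialize (Hbefore i0 ltac:(lia)).
      apply (ksat_block_form j lj _ Hj) in Hbefore. rewrite kst_ksuffix_0 in Hbefore; auto. }
    assert (Hblock : block lab r (S k) = 1).
    { unfold block. rewrite count_below_S_true.
      - f_equal. apply (block_const lab r lj k Hconst).
      - split; [apply step_in_iff_pos_in_S; auto | rewrite Hconst, Hk1; auto]. }
    rewrite <- Nat.add_succ_comm, <- (IH (S j) (ksuffix r (S k)) l1 Hj1 Hrest i l) by lia.
    rewrite block_label_ksuffix, Hblock by auto. reflexivity.
  - rewrite ksat_fglobally in Hr.
    assert (Hconst : forall k, pos_in (klen r) k -> lab (kst r k) = lj).
    { intros k Hk. specialize (Hr k Hk). apply (ksat_block_form j lj _ Hj) in Hr.
      rewrite kst_ksuffix_0 in Hr; auto. }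
    split.
    + intros [k [Hk [Hb _]]]. rewrite (block_const lab r lj k) in Hb; [discriminate|].
      intros; apply Hconst; eauto using pos_in_le.
    + intro H. exfalso; apply (block_label_opt_none_above j (j + S i) l Hj1); auto; lia.
Qed.

Lemma ksat_blocks_form_ksuffix m : forall k, pos_in (klen p) k ->
  ksat lab (blocks_form m (block lab p k)) (ksuffix p k).
Proof.
  induction m as [|m IH]; intros k Hk; set (j := block lab p k);
    assert (Hj : block_label_opt j = Some (lab (kst p k)))
      by (apply block_label_opt_of, block_label_at; auto).
  - simpl. apply (ksat_block_form _ _ _ Hj). rewrite kst_ksuffix_0; auto.
  - simpl. destruct (block_label_opt (S j)) as [l1|] eqn:Hj1.
    + apply ksat_fand. split; [apply (ksat_block_form _ _ _ Hj); rewrite kst_ksuffix_0; auto|].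
      destruct (first_position_of_block lab p (S j) l1 (block_label_opt_some _ _ Hj1))
        as [k2 [Hk2 [Hb2 [_ Hbefore]]]].
      assert (k < k2).
      { destruct (le_lt_dec k2 k) as [Hle|]; auto.
        pose proof (block_mono lab p k2 k Hle). unfold j in *; lia. }
      exists (k2 - k). rewrite pos_in_ksuffix, !ksuffix_ksuffix by auto.
      replace (k + (k2 - k)) with k2 by lia. split; [auto | split].
      * rewrite <- Hb2. apply IH; auto.
      * intros i Hi. rewrite ksuffix_ksuffix. apply (ksat_block_form _ _ _ Hj).
        rewrite kst_ksuffix_0.
        pose proof (block_mono lab p k (k + i) (Nat.le_add_r k i)).
        pose proof (Hbefore (k + i) ltac:(lia)).
        apply label_eq_of_block_eq; [eapply pos_in_le; eauto; lia | auto | unfold j in *; lia].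
    + apply ksat_fglobally. intros k' Hk'. rewrite ksuffix_ksuffix.
      apply (ksat_block_form _ _ _ Hj). rewrite kst_ksuffix_0.
      rewrite pos_in_ksuffix in Hk' by auto.
      apply label_eq_of_block_eq; auto.
      pose proof (block_mono lab p k (k + k') (Nat.le_add_r k k')).
      destruct (le_lt_dec (block lab p (k + k')) j) as [|Habove]; [unfold j in *; lia|].
      exfalso; apply (block_label_opt_none_above j _ _ Hj1 Habove (block_label_at lab p _ Hk')).
Qed.

Lemma ksat_char_form : ksat lab char_form p.
Proof.
  intro m. pose proof (ksat_blocks_form_ksuffix m 0 (pos_in_0 _)) as H.
  rewrite ksuffix_0 in H. exact H.
Qed.

Lemma char_form_stutter_equiv r : ksat lab char_form r -> stutter_equiv lab r p.
Proof.
  intros H j l.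
  assert (H0 : block_label_opt 0 = Some (lab (kst p 0)))
    by (apply block_label_opt_of, block_label_0; auto).
  apply (blocks_form_sound j 0 r _ H0 (H j) j l); auto.
Qed.

End CharacteristicFormula.

Lemma kmaximal_path_exists {St : Type} (R : St -> St -> Prop) (x : St) :
  exists q, kst q 0 = x /\ kmaximal_path R q.
Proof.
  set (next := fun s => epsilon (inhabits s) (R s)).
  assert (Hnext : forall s, (exists v, R s v) -> R s (next s))
    by (intros s; apply epsilon_spec).
  set (f := fun k => Nat.iter k next x).
  set (stuck := fun k => ~ exists v, R (f k) v).
  destruct (classic (exists k, stuck k)) as [Hstuck|Hnever].
  - destruct (exists_least stuck Hstuck) as [n [Hn Hbefore]].
    exists (mkKpath f (Some n)). split; [auto | split; simpl].
    + intros k Hk. apply Hnext, NNPP, (Hbefore k Hk).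
    + intros v Hv; apply Hn; eauto.
  - exists (mkKpath f None). split; [auto | split; simpl; auto].
    intros k _. apply Hnext, NNPP. intro Hk; apply Hnever; exists k; auto.
Qed.

Lemma trivial_ctrace_exists {Act : Type} (tau : Act) {St : Type} (pi : path Act St) :
  exists sigma : ctrace Act unit, is_ctrace_of tau (fun _ => tt) pi sigma.
Proof.
  set (P := noninert tau (fun _ : St => tt) pi).
  exists (mkCtrace tt (fun j => if excluded_middle_informative (exists k, nth_sat P j k)
                              then Some (pact pi (epsilon (inhabits 0) (nth_sat P j)), tt)
                              else None)).
  split; [auto|]. intros j a [].
  simpl. destruct (excluded_middle_informative _) as [Hj|Hj].
  - pose proof (epsilon_spec (inhabits 0) (nth_sat P j) Hj) as Hk.
    split.
    + intro E; inversion E. eauto.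
    + intros [k' [Hk' [<- _]]]. rewrite (nth_sat_unique P j _ k' Hk Hk'); auto.
  - split; [discriminate|]. intros [k [Hk _]]. exfalso; eauto.
Qed.

Section ConsistentL2TS.
Context {Act : Type} (tau : Act) {AP : Type} (M : L2TS Act AP).
Hypothesis HM : l2_consistent tau M.

Notation St := (l2_st M).
Notation lab := (@l2_lab Act AP M).
Notation tr := (@l2_tr Act AP M).
Notation trivial_col := (fun _ : St => tt).
Notation sat := (@l2_state_sat Act AP M).

Lemma tr_label_eq_iff_tau s a t : tr s a t -> (lab s = lab t <-> a = tau).
Proof. apply HM. Qed.

Lemma tr_target_label s a t s' t' : tr s a t -> tr s' a t' -> lab s = lab s' -> lab t = lab t'.
Proof. apply HM. Qed.

Lemma tr_action_unique s a t s' b t' : tr s a t -> tr s' b t' ->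
  lab s = lab s' -> lab t = lab t' -> a = b.
Proof. apply HM. Qed.

Definition kpath_of (pi : path Act St) : kpath St := mkKpath (pst pi) (plen pi).

Lemma noninert_iff_label_change x pi k : is_path tr x pi ->
  noninert tau trivial_col pi k <-> label_change lab (kpath_of pi) k.
Proof.
  intros [_ Hpi]. unfold noninert, label_change; simpl. split.
  - intros [Hk Hn]. split; auto. intro He. apply Hn; split; auto.
    apply (tr_label_eq_iff_tau _ _ _ (Hpi k Hk)); auto.
  - intros [Hk Hn]. split; auto. intros [Ha _]. apply Hn.
    apply (tr_label_eq_iff_tau _ _ _ (Hpi k Hk)); auto.
Qed.

Lemma nth_noninert_iff x pi j k : is_path tr x pi ->
  nth_sat (noninert tau trivial_col pi) j k <->
  label_change lab (kpath_of pi) k /\ block lab (kpath_of pi) k = j.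
Proof.
  intro Hpi. rewrite nth_sat_iff_count, (noninert_iff_label_change x) by exact Hpi.
  unfold block. rewrite (count_below_ext _ _ k (fun i => noninert_iff_label_change x pi i Hpi)).
  reflexivity.
Qed.

Lemma kmaximal_kpath_of x pi : is_path tr x pi -> maximal tr pi ->
  kst (kpath_of pi) 0 = x /\ kmaximal_path (@l2_krel Act AP M) (kpath_of pi).
Proof.
  intros [H0 Hpi] Hmax. split; [auto | split; simpl].
  - intros k Hk. exists (pact pi k); auto.
  - unfold maximal in Hmax. destruct (plen pi); auto. intros v [a Ha]; eapply Hmax; eauto.
Qed.

Lemma maximal_path_of_kmaximal x q : kst q 0 = x -> kmaximal_path (@l2_krel Act AP M) q ->
  exists pi, is_path tr x pi /\ maximal tr pi /\ kpath_of pi = q.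
Proof.
  intros H0 [Hsteps Hmax].
  set (act := fun k => epsilon (inhabits tau) (fun a => tr (kst q k) a (kst q (S k)))).
  exists (mkPath (kst q) act (klen q)). split; [split|split].
  - auto.
  - intros k Hk. apply (epsilon_spec (inhabits tau) (fun a => tr (kst q k) a (kst q (S k)))).
    apply Hsteps, Hk.
  - unfold maximal; simpl. destruct (klen q); auto. intros a u Ht; apply (Hmax u); exists a; auto.
  - destruct q; reflexivity.
Qed.

Lemma ctrace_block_label x1 x2 pi1 pi2 sigma :
  is_path tr x1 pi1 -> is_path tr x2 pi2 -> lab x1 = lab x2 ->
  is_ctrace_of tau trivial_col pi1 sigma -> is_ctrace_of tau trivial_col pi2 sigma ->
  forall j l, block_label lab (kpath_of pi1) j l -> block_label lab (kpath_of pi2) j l.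
Proof.
  intros Hpi1 Hpi2 Hx H1 H2 j. induction j as [|j IH]; intro l.
  - rewrite !block_label_0. simpl. destruct Hpi1 as [-> _], Hpi2 as [-> _]. congruence.
  - rewrite !block_label_S. intros [k [Hc [Hb Hl]]].
    assert (E : ctf sigma j = Some (pact pi1 k, tt))
      by (apply (proj2 H1); exists k; rewrite (nth_noninert_iff x1); auto).
    apply (proj2 H2) in E. destruct E as [k' [Hk' [Ha _]]].
    apply (nth_noninert_iff x2) in Hk'; auto. destruct Hk' as [Hc' Hb'].
    exists k'; split; [auto | split; auto].
    assert (Hsrc : lab (pst pi1 k) = lab (pst pi2 k')).
    { apply (block_label_unique lab (kpath_of pi2) j).
      - apply IH. rewrite <- Hb. apply label_change_source, Hc.
      - rewrite <- Hb'. apply label_change_source, Hc'. }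
    rewrite <- Hl. simpl. destruct Hc as [Hs1 _], Hc' as [Hs2 _].
    symmetry. apply (tr_target_label _ (pact pi1 k) _ (pst pi2 k') _ (proj2 Hpi1 k Hs1)); auto.
    rewrite <- Ha. apply (proj2 Hpi2 k' Hs2).
Qed.

Lemma nth_noninert_transfer x1 x2 pi1 pi2 j k :
  is_path tr x1 pi1 -> is_path tr x2 pi2 ->
  stutter_equiv lab (kpath_of pi1) (kpath_of pi2) ->
  nth_sat (noninert tau trivial_col pi1) j k ->
  exists k', nth_sat (noninert tau trivial_col pi2) j k' /\ pact pi2 k' = pact pi1 k.
Proof.
  intros Hpi1 Hpi2 Hst Hk. apply (nth_noninert_iff x1) in Hk; auto. destruct Hk as [Hc Hb].
  assert (Htgt : block_label lab (kpath_of pi1) (S j) (lab (pst pi1 (S k))))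
    by (apply block_label_S; eauto).
  apply Hst, block_label_S in Htgt. destruct Htgt as [k' [Hc' [Hb' Hl']]].
  exists k'. split; [apply (nth_noninert_iff x2); auto|].
  assert (Hsrc : lab (pst pi1 k) = lab (pst pi2 k')).
  { apply (block_label_unique lab (kpath_of pi2) j).
    - apply Hst. rewrite <- Hb. apply label_change_source, Hc.
    - rewrite <- Hb'. apply label_change_source, Hc'. }
  destruct Hc as [Hs1 _], Hc' as [Hs2 _].
  symmetry. apply (tr_action_unique _ _ _ _ _ _ (proj2 Hpi1 k Hs1) (proj2 Hpi2 k' Hs2)); auto.
Qed.

Lemma stutter_equiv_ctrace x1 x2 pi1 pi2 sigma :
  is_path tr x1 pi1 -> is_path tr x2 pi2 ->
  stutter_equiv lab (kpath_of pi1) (kpath_of pi2) ->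
  is_ctrace_of tau trivial_col pi1 sigma -> is_ctrace_of tau trivial_col pi2 sigma.
Proof.
  intros Hpi1 Hpi2 Hst [H0 H1]. split; [destruct (ct0 sigma); auto|].
  intros j a c. rewrite H1. split.
  - intros [k [Hk [<- <-]]].
    destruct (nth_noninert_transfer x1 x2 pi1 pi2 j k Hpi1 Hpi2 Hst Hk) as [k' [? ?]].
    exists k'; auto.
  - intros [k [Hk [<- <-]]].
    destruct (nth_noninert_transfer x2 x1 pi2 pi1 j k Hpi2 Hpi1 (stutter_equiv_sym _ _ _ Hst) Hk)
      as [k' [? ?]].
    exists k'; auto.
Qed.

Lemma l2_state_sat_of_trT u v : lab u = lab v -> trT tau tr u v ->
  forall psi, sat u psi -> sat v psi.
Proof.
  intros Hl HT psi Hu q Hq0 Hqmax.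
  destruct (maximal_path_of_kmaximal v q Hq0 Hqmax) as [pi2 [Hpi2 [Hmax2 <-]]].
  destruct (trivial_ctrace_exists tau pi2) as [sigma Hsigma2].
  assert (Hsigma : complete_ctraces tau tr trivial_col u sigma)
    by (apply HT; exists pi2; auto).
  destruct Hsigma as [pi1 [Hpi1 [Hmax1 Hsigma1]]].
  destruct (kmaximal_kpath_of u pi1 Hpi1 Hmax1) as [H10 Hkmax1].
  apply (ksat_stutter_equiv lab psi (kpath_of pi1)); [|exact (Hu _ H10 Hkmax1)].
  intros j l. split; [apply (ctrace_block_label u v pi1 pi2 sigma)
                     | apply (ctrace_block_label v u pi2 pi1 sigma)]; auto.
Qed.

Lemma complete_ctraces_of_ltl_implies u v : (forall psi, sat v psi -> sat u psi) ->
  forall sigma, complete_ctraces tau tr trivial_col u sigma ->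
                complete_ctraces tau tr trivial_col v sigma.
Proof.
  intros Hsat sigma [pi1 [Hpi1 [Hmax1 Hsigma1]]].
  destruct (kmaximal_kpath_of u pi1 Hpi1 Hmax1) as [H10 Hkmax1].
  set (chi := char_form lab (kpath_of pi1)).
  (* pi1 refutes [FNeg chi] at u, so some maximal path refutes it at v. *)
  assert (Hex : exists q, kst q 0 = v /\ kmaximal_path (@l2_krel Act AP M) q /\ ksat lab chi q).
  { apply NNPP; intro Hnone.
    assert (Hv : sat v (FNeg chi)) by (intros q Hq0 Hqmax Hq; apply Hnone; eauto).
    exact (Hsat _ Hv _ H10 Hkmax1 (ksat_char_form lab _)). }
  destruct Hex as [q [Hq0 [Hqmax Hq]]].
  destruct (maximal_path_of_kmaximal v q Hq0 Hqmax) as [pi2 [Hpi2 [Hmax2 <-]]].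
  exists pi2; split; [auto | split; [auto |]].
  apply (stutter_equiv_ctrace u v pi1 pi2); auto.
  apply stutter_equiv_sym, char_form_stutter_equiv, Hq.
Qed.

Lemma l2_state_sat_atom w a : sat w (FAtom a) <-> lab w a.
Proof.
  split.
  - intro Hw. destruct (kmaximal_path_exists (@l2_krel Act AP M) w) as [q [Hq0 Hqmax]].
    specialize (Hw q Hq0 Hqmax). simpl in Hw. rewrite Hq0 in Hw; auto.
  - intros Hw q Hq0 _. simpl. rewrite Hq0; auto.
Qed.

Lemma trT_iff_ltl_equiv u v :
  (lab u = lab v /\ trT tau tr u v) <-> (forall psi, sat u psi <-> sat v psi).
Proof.
  split.
  - intros [Hl HT] psi. split; apply l2_state_sat_of_trT; auto.
    intro sigma; symmetry; apply HT.
  - intro H. split.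
    + apply functional_extensionality; intro a. apply propositional_extensionality.
      rewrite <- !l2_state_sat_atom. apply H.
    + intro sigma. split; apply complete_ctraces_of_ltl_implies; intro psi; apply H.
Qed.

End ConsistentL2TS.

Theorem corollary9p3 (Act : Type) (tau : Act) (AP : Type)
  (eta : LTS Act -> L2TS Act AP)
  (etas : forall L : LTS Act, lts_st L -> l2_st (eta L))
  (Heta : is_transformation tau etas)
  (HT : preserves_reflects_trT tau etas)
  (L : LTS Act) (s t : lts_st L) :
  trT tau (@lts_tr Act L) s t <->
  (forall psi : form AP,
     @l2_state_sat Act AP (eta L) (etas L s) psi <-> @l2_state_sat Act AP (eta L) (etas L t) psi).
Proof.
  rewrite (HT L s t). apply trT_iff_ltl_equiv, (proj1 (Heta L)).
Qed.
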